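(* Let $V$ be a real vector space of finite even dimension with nondegenerate quadratic form $Q$, and let $\sigma$ be a real structure on $\mathbb{C}l(V)$. The following are equivalent: (1) $\sigma$ is admissible; (2) $V_\sigma$ is stable under $c$; (3) $V$ is stable under $\sigma$; (4) $\sigma$ restricts to a $Q$-orthogonal symmetry of $V$ (an involutive $Q$-orthogonal transformation of $V$); (5) the subspaces $V_+:=V\cap V_\sigma$ and $V_-:=V\cap iV_\sigma$ form a $Q$-orthogonal decomposition $V=V_+\oplus V_-$.
   Context: $Cl(V,Q)$ is the real Clifford algebra with $v^2=+Q(v)$, $\mathbb{C}l(V)=Cl(V,Q)\otimes\mathbb{C}$ with complex conjugation $c(a\otimes\lambda)=a\otimes\bar\lambda$, and $V^{\mathbb{C}}=V\otimes\mathbb{C}\subset\mathbb{C}l(V)$. A real structure is an involutive antilinear algebra automorphism of $\mathbb{C}l(V)$ stabilizing $V^{\mathbb{C}}$; it is admissible if it commutes with $c$. $V_\sigma=\{v\in V^{\mathbb{C}}:\sigma(v)=v\}$. *)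

From mathcomp Require Import all_boot all_algebra.
From mathcomp Require Import reals.
From mathcomp.real_closed Require Import complex.
Import GRing.Theory Num.Theory.

Set Implicit Arguments.
Unset Strict Implicit.
Unset Printing Implicit Defensive.

Local Open Scope ring_scope.

Section CliffordDefs.
Variable R : realType.
Local Notation C := R[i].
Local Notation rC x := ((x : R)%:C)%C.

Variable V : vectType R.

Definition polarQ (Q : V -> R) (v w : V) : R := (Q (v + w) - Q v - Q w) / 2%:R.

Definition is_quadratic_form (Q : V -> R) : Prop :=
  (forall (a : R) (v : V), Q (a *: v) = a ^+ 2 * Q v) /\
  (forall (a : R) (u v w : V), polarQ Q (a *: u + v) w = a * polarQ Q u w + polarQ Q v w).

Definition nondegenerate_qf (Q : V -> R) : Prop :=
  forall v : V, (forall w : V, polarQ Q v w = 0) -> v = 0.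

Definition clifford_map (Q : V -> R) (B : algType C) (f : V -> B) : Prop :=
  (forall (a : R) (u v : V), f (a *: u + v) = rC a *: f u + f v) /\
  (forall v : V, f v * f v = (rC (Q v)) %:A).

Definition calg_morph (A B : algType C) (g : A -> B) : Prop :=
  (forall (z : C) (x y : A), g (z *: x + y) = z *: g x + g y) /\
  (forall x y : A, g (x * y) = g x * g y) /\ g 1 = 1.

Definition antilinear_morph (A : algType C) (s : A -> A) : Prop :=
  (forall (z : C) (x y : A), s (z *: x + y) = z^* *: s x + s y) /\
  (forall x y : A, s (x * y) = s x * s y) /\ s 1 = 1.

(* (A, j, c) is the complexified Clifford algebra  Cl(V,Q) (x)_R C,  with j the
   inclusion V -> Cl(V,Q) -> Cl(V,Q) (x) C, and c the complex conjugation
   c(a (x) lambda) = a (x) conj(lambda).  Cl(V,Q) (x) C is characterised (up to unique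
   isomorphism) by the universal property: C-algebra maps out of it correspond to
   real-linear maps f from V with f(v)^2 = Q(v).  The conjugation c is the (unique)
   antilinear involutive algebra automorphism fixing V, i.e. fixing Cl(V,Q). *)
Definition complexified_clifford (Q : V -> R) (A : algType C) (j : V -> A) (c : A -> A)
  : Prop :=
  clifford_map Q j /\
  (forall (B : algType C) (f : V -> B), clifford_map Q f ->
     exists g : A -> B, calg_morph g /\ (forall v, g (j v) = f v) /\
       (forall g' : A -> B, calg_morph g' -> (forall v, g' (j v) = f v) ->
          forall x, g' x = g x)) /\
  antilinear_morph c /\ (forall x, c (c x) = x) /\ (forall v, c (j v) = j v).

(* V^C = V (x) C inside Cl(V) (x) C : the complex span of j(V) *)
Definition VC (A : algType C) (j : V -> A) (x : A) : Prop :=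
  exists v w : V, x = j v + 'i%C *: j w.

Definition real_structure (A : algType C) (j : V -> A) (s : A -> A) : Prop :=
  antilinear_morph s /\ (forall x, s (s x) = x) /\ (forall x, VC j x -> VC j (s x)).

Definition admissible (A : algType C) (c s : A -> A) : Prop :=
  forall x, s (c x) = c (s x).

Definition Vsigma (A : algType C) (j : V -> A) (s : A -> A) (x : A) : Prop :=
  VC j x /\ s x = x.

Definition Vplus (A : algType C) (j : V -> A) (s : A -> A) (v : V) : Prop :=
  Vsigma j s (j v).
Definition Vminus (A : algType C) (j : V -> A) (s : A -> A) (v : V) : Prop :=
  exists y : A, Vsigma j s y /\ j v = 'i%C *: y.

End CliffordDefs.

From HB Require Import structures.
From mathcomp Require Import all_boot all_algebra.
From mathcomp Require Import reals.
From mathcomp.real_closed Require Import complex.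
From mathcomp Require Import lra.
Import GRing.Theory Num.Theory.

Set Implicit Arguments.
Unset Strict Implicit.
Unset Printing Implicit Defensive.

Local Open Scope ring_scope.

(* Proof: sigma and the conjugation c are antilinear, so sigma \o c and c \o sigma
   are C-algebra endomorphisms of Cl(V) (x) C; by the universal property they
   coincide (admissibility) iff they agree on V, i.e. iff c fixes sigma(V).
   Since V^C = V_sigma (+) i V_sigma, this holds iff c preserves V_sigma; and since
   the c-fixed part of V^C is V, it holds iff sigma(V) = V.  The restriction s of
   sigma to V is then linear, involutive and Q-preserving (sigma fixes real scalars
   and squares), and V_+, V_- are its (+1)- and (-1)-eigenspaces, which are
   Q-orthogonal because Q(a + b) = Q(s(a + b)) = Q(a - b). *)

(* [neq0Ci] and [conjCi] are stated for the generic imaginary unit of a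
   numClosedFieldType; restating them for ['i%C] lets rewriting match. *)
Lemma i_neq0 (R : rcfType) : 'i%C != 0 :> R[i].
Proof. exact: neq0Ci. Qed.

Lemma conj_i (R : rcfType) : ('i%C : R[i])^* = - 'i%C.
Proof. exact: conjCi. Qed.

Section AntilinearMorphism.
Variables (R : realType) (A : algType R[i]) (s : A -> A).
Hypothesis s_al : antilinear_morph s.

Lemma antilinearD x y : s (x + y) = s x + s y.
Proof. by have := s_al.1 1 x y; rewrite conjC1 !scale1r. Qed.

Lemma antilinear0 : s 0 = 0.
Proof. by apply: (addrI (s 0)); rewrite -antilinearD !addr0. Qed.

Lemma antilinearZ k x : s (k *: x) = k^* *: s x.
Proof. by have := s_al.1 k x 0; rewrite !addr0 antilinear0 addr0. Qed.

Lemma antilinearZr (a : R) x : s ((a%:C)%C *: x) = (a%:C)%C *: s x.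
Proof. by rewrite antilinearZ (conjc_real a : (a%:C)%C^* = (a%:C)%C). Qed.

Lemma antilinearN x : s (- x) = - s x.
Proof. by rewrite -scaleN1r antilinearZ conjCN1 scaleN1r. Qed.

Lemma antilinearB x y : s (x - y) = s x - s y.
Proof. by rewrite antilinearD antilinearN. Qed.

End AntilinearMorphism.

Lemma antilinear_comp_calg_morph (R : realType) (A : algType R[i]) (s1 s2 : A -> A) :
  antilinear_morph s1 -> antilinear_morph s2 -> calg_morph (fun x => s1 (s2 x)).
Proof.
move=> s1_al s2_al; split; [|split].
- by move=> k x y; rewrite s2_al.1 s1_al.1 conjCK.
- by move=> x y; rewrite s2_al.2.1 s1_al.2.1.
- by rewrite s2_al.2.2 s1_al.2.2.
Qed.

Section CliffordMap.
Variables (R : realType) (V : vectType R) (Q : V -> R) (B : algType R[i]) (f : V -> B).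
Hypothesis f_cl : clifford_map Q f.

Lemma clifford_mapD u v : f (u + v) = f u + f v.
Proof. by have := f_cl.1 1 u v; rewrite rmorph1 !scale1r. Qed.

Lemma clifford_map0 : f 0 = 0.
Proof. by apply: (addrI (f 0)); rewrite -clifford_mapD !addr0. Qed.

Lemma clifford_mapZ a v : f (a *: v) = (a%:C)%C *: f v.
Proof. by have := f_cl.1 a v 0; rewrite !addr0 clifford_map0 addr0. Qed.

Lemma clifford_mapN v : f (- v) = - f v.
Proof. by rewrite -scaleN1r clifford_mapZ rmorphN1 scaleN1r. Qed.

Lemma clifford_mapB u v : f (u - v) = f u - f v.
Proof. by rewrite clifford_mapD clifford_mapN. Qed.

Lemma clifford_map_sqr_inj u v : f u * f u = f v * f v -> Q u = Q v.
Proof. by rewrite !f_cl.2 => /(fmorph_inj (in_alg B)) /complexI. Qed.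

Lemma clifford_map_inj : nondegenerate_qf Q -> injective f.
Proof.
move=> Q_nd u v fuv; apply/eqP; rewrite -subr_eq0; apply/eqP/Q_nd => w.
have f0 : f (u - v) = 0 by rewrite clifford_mapB fuv subrr.
have Q0 : Q 0 = 0.
  apply/complexI/(fmorph_inj (in_alg B)).
  by rewrite /= -f_cl.2 clifford_map0 mul0r rmorph0 scale0r.
have Quvw : Q (u - v + w) = Q w by apply: clifford_map_sqr_inj; rewrite clifford_mapD f0 add0r.
have Quv : Q (u - v) = 0 by rewrite -Q0; apply: clifford_map_sqr_inj; rewrite f0 clifford_map0.
by rewrite /polarQ Quvw Quv subr0 subrr mul0r.
Qed.
End CliffordMap.

Lemma calg_morph_clifford_map (R : realType) (V : vectType R) (Q : V -> R)
    (A B : algType R[i]) (f : V -> A) (g : A -> B) :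
  clifford_map Q f -> calg_morph g -> clifford_map Q (fun v => g (f v)).
Proof.
move=> f_cl [g_lin [g_mul g1]].
have gD x y : g (x + y) = g x + g y by have := g_lin 1 x y; rewrite !scale1r.
have g0 : g 0 = 0 by apply: (addrI (g 0)); rewrite -gD !addr0.
split=> [a u v|v]; first by rewrite f_cl.1 g_lin.
by rewrite -g_mul f_cl.2 -[_%:A]addr0 g_lin g0 g1 addr0.
Qed.

Lemma complexified_clifford_morph_eq (R : realType) (V : vectType R) (Q : V -> R)
    (A : algType R[i]) (j : V -> A) (c : A -> A) (B : algType R[i]) (g1 g2 : A -> B) :
  complexified_clifford Q j c -> calg_morph g1 -> calg_morph g2 ->
  (forall v, g1 (j v) = g2 (j v)) -> g1 =1 g2.
Proof.
move=> [j_cl [univ _]] g1_morph g2_morph g12 x.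
have [g [_ [_ g_uniq]]] := univ B _ (calg_morph_clifford_map j_cl g1_morph).
by rewrite (g_uniq _ g1_morph (fun=> erefl)) (g_uniq _ g2_morph).
Qed.

Section ComplexSpan.
Variables (R : realType) (V : vectType R) (Q : V -> R) (A : algType R[i]) (j : V -> A).
Hypothesis j_cl : clifford_map Q j.

Lemma VC_j v : VC j (j v).
Proof. by exists v, 0; rewrite (clifford_map0 j_cl) scaler0 addr0. Qed.

Lemma VCD x y : VC j x -> VC j y -> VC j (x + y).
Proof.
move=> [v [w ->]] [v' [w' ->]]; exists (v + v'), (w + w').
by rewrite !(clifford_mapD j_cl) scalerDr addrACA.
Qed.

Lemma VCZ k x : VC j x -> VC j (k *: x).
Proof.
move=> [v [w ->]]; case: k => a b; rewrite [(_ +i* _)%C]complex.complexE /= scalerDl -scalerA.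
have VCZr (r : R) u u' : VC j ((r%:C)%C *: (j u + 'i%C *: j u')).
  by exists (r *: u), (r *: u'); rewrite !(clifford_mapZ j_cl) scalerDr scalerA mulrC -scalerA.
have VCZi u u' : VC j ('i%C *: (j u + 'i%C *: j u')).
  exists (- u'), u; rewrite (clifford_mapN j_cl) scalerDr scalerA -expr2 sqr_i scaleN1r.
  exact: addrC.
apply: VCD; first exact: VCZr.
have [u [u' ->]] := VCZr b v w; exact: VCZi.
Qed.

Section ConjugationFixingV.
Variable c : A -> A.
Hypotheses (c_al : antilinear_morph c) (c_j : forall v, c (j v) = j v).

Lemma conj_VC v w : c (j v + 'i%C *: j w) = j v - 'i%C *: j w.
Proof. by rewrite (antilinearD c_al) (antilinearZ c_al) !c_j conj_i scaleNr. Qed.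

Lemma VC_conj x : VC j x -> VC j (c x).
Proof.
move=> [v [w ->]]; exists v, (- w).
by rewrite conj_VC (clifford_mapN j_cl) scalerN.
Qed.

Lemma VC_conj_fixed x : VC j x -> c x = x -> exists w, x = j w.
Proof.
move=> [v [w ->]]; rewrite conj_VC => /addrI /esym /eqP.
rewrite -subr_eq0 opprK -mulr2n -scaler_nat scalerA scaler_eq0 mulf_eq0.
rewrite pnatr_eq0 (negbTE (i_neq0 R)) /= => /eqP jw0.
by exists v; rewrite jw0 scaler0 addr0.
Qed.

End ConjugationFixingV.

End ComplexSpan.

Section QuadraticForm.
Variables (R : realType) (V : vectType R) (Q : V -> R).
Hypothesis Q_qf : is_quadratic_form Q.

Lemma quadratic_form0 : Q 0 = 0.
Proof. by have := Q_qf.1 0 0; rewrite scale0r expr0n mul0r. Qed.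

Lemma quadratic_formN v : Q (- v) = Q v.
Proof. by rewrite -scaleN1r Q_qf.1 sqrrN expr1n mul1r. Qed.

Lemma polarQ_eq0 u v : Q (u + v) = Q (u - v) -> polarQ Q u v = 0.
Proof.
move=> Quv; have := Q_qf.2 (-1) v 0 u.
rewrite scaleN1r addr0 /polarQ add0r quadratic_form0 quadratic_formN.
rewrite [- v + u]addrC [v + u]addrC -Quv; lra.
Qed.

End QuadraticForm.

Section OrthogonalSymmetry.
Variables (R : realType) (V : vectType R) (s : V -> V).
Hypothesis s_lin : forall (a : R) (u v : V), s (a *: u + v) = a *: s u + s v.
HB.instance Definition _ := GRing.isLinear.Build R V V *:%R s s_lin.

Lemma involution_eigen_decomposition v : (forall v, s (s v) = v) ->
  exists a b, [/\ s a = a, s b = - b & v = a + b].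
Proof.
move=> s_inv; exists (2^-1 *: (v + s v)), (2^-1 *: (v - s v)).
rewrite !linearZ /= raddfD raddfB /= s_inv addrC opprB; split=> //.
by rewrite -scalerDr addrACA subrr addr0 -mulr2n -scaler_nat scalerA mulVf ?scale1r ?pnatr_eq0.
Qed.

Lemma isometry_eigen_orthogonal (Q : V -> R) a b :
  is_quadratic_form Q -> (forall v, Q (s v) = Q v) -> s a = a -> s b = - b ->
  polarQ Q a b = 0.
Proof.
move=> Q_qf s_iso sa sb; apply: polarQ_eq0 => //.
by rewrite -s_iso raddfD /= sa sb.
Qed.

End OrthogonalSymmetry.

Section RealStructure.
Variables (R : realType) (V : vectType R) (Q : V -> R) (A : algType R[i]).
Variables (j : V -> A) (sigma : A -> A).
Hypotheses (j_cl : clifford_map Q j) (sigma_rs : real_structure j sigma).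

Let sigma_al : antilinear_morph sigma := sigma_rs.1.
Let sigmaK : forall x, sigma (sigma x) = x := sigma_rs.2.1.
Let sigma_VC : forall x, VC j x -> VC j (sigma x) := sigma_rs.2.2.

Lemma Vsigma_decomposition z : VC j z ->
  exists p q, [/\ Vsigma j sigma p, Vsigma j sigma q & z = p + 'i%C *: q].
Proof.
move=> VCz; have VCsz := sigma_VC VCz.
have conj_half : (2^-1 : R[i])^* = 2^-1 by rewrite fmorphV; congr (_^-1); exact: conjC_nat.
exists (2^-1 *: (z + sigma z)), (2^-1 *: ('i%C *: (sigma z - z))); split.
- split; first exact/(VCZ j_cl)/(VCD j_cl).
  by rewrite (antilinearZ sigma_al) (antilinearD sigma_al) sigmaK conj_half addrC.
- split.
    apply/(VCZ j_cl)/(VCZ j_cl)/(VCD j_cl) => //.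
    by rewrite -scaleN1r; apply: (VCZ j_cl).
  rewrite !(antilinearZ sigma_al) (antilinearB sigma_al) sigmaK conj_half conj_i.
  by rewrite scaleNr -scalerN opprB.
- rewrite !scalerA mulrAC -expr2 sqr_i mulN1r scaleNr -scalerN opprB -scalerDr.
  by rewrite addrACA subrr addr0 -mulr2n -scalerMnr scalerMnl -mulr_natr mulVf ?scale1r ?pnatr_eq0.
Qed.

Lemma VplusE v : Vplus j sigma v <-> sigma (j v) = j v.
Proof. by split=> [[] //|sjv]; split=> //; apply: (VC_j j_cl). Qed.

Lemma VminusE v : Vminus j sigma v <-> sigma (j v) = - j v.
Proof.
split=> [[y [[_ sy] ->]]|sjv].
  by rewrite (antilinearZ sigma_al) sy conj_i scaleNr.
exists ('i%C *: j (- v)); split; first split.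
- exact/(VCZ j_cl)/(VC_j j_cl).
- rewrite (antilinearZ sigma_al) (clifford_mapN j_cl) (antilinearN sigma_al) sjv.
  by rewrite conj_i scaleNr opprK scalerN.
- by rewrite (scalerA ('i%C : R[i])) -expr2 sqr_i scaleN1r (clifford_mapN j_cl) opprK.
Qed.

Definition sigma_stabilizes_V : Prop := forall v : V, exists w : V, sigma (j v) = j w.

Definition sigma_orthogonal_symmetry : Prop := exists s : V -> V,
  (forall (a : R) (u v : V), s (a *: u + v) = a *: s u + s v) /\
  (forall v, Q (s v) = Q v) /\ (forall v, s (s v) = v) /\
  (forall v, sigma (j v) = j (s v)).

Definition Vplus_Vminus_orthogonal_splitting : Prop :=
  (forall v : V, exists a b : V, [/\ Vplus j sigma a, Vminus j sigma b & v = a + b]) /\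
  (forall v : V, Vplus j sigma v -> Vminus j sigma v -> v = 0) /\
  (forall a b : V, Vplus j sigma a -> Vminus j sigma b -> polarQ Q a b = 0).

Hypothesis Q_nd : nondegenerate_qf Q.

Lemma sigma_stabilizes_V_orthogonal_symmetry :
  sigma_stabilizes_V <-> sigma_orthogonal_symmetry.
Proof.
split=> [sigmaV | [s [_ [_ [_ sigma_j]]]] v]; last by exists (s v).
have j_inj := clifford_map_inj j_cl Q_nd.
have /all_sig [s sigma_j] v : {w | sigma (j v) = j w} := sig_eqW (sigmaV v).
exists s; split; [|split; [|split]] => // [a u v | v | v].
- apply: j_inj; rewrite -sigma_j !j_cl.1 (antilinearD sigma_al) (antilinearZr sigma_al).
  by rewrite !sigma_j.
- apply: (clifford_map_sqr_inj j_cl).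
  by rewrite -!sigma_j -sigma_al.2.1 j_cl.2 (antilinearZr sigma_al) sigma_al.2.2.
- by apply: j_inj; rewrite -!sigma_j sigmaK.
Qed.

Lemma orthogonal_symmetry_splitting : is_quadratic_form Q ->
  sigma_orthogonal_symmetry -> Vplus_Vminus_orthogonal_splitting.
Proof.
move=> Q_qf [s [s_lin [s_iso [s_inv sigma_j]]]].
have j_inj := clifford_map_inj j_cl Q_nd.
have VplusP v : Vplus j sigma v <-> s v = v.
  by rewrite VplusE sigma_j; split=> [/j_inj|->].
have VminusP v : Vminus j sigma v <-> s v = - v.
  by rewrite VminusE sigma_j -(clifford_mapN j_cl); split=> [/j_inj|->].
split; [|split].
- move=> v; have [a [b [sa sb ->]]] := involution_eigen_decomposition s_lin v s_inv.
  by exists a, b; split; rewrite ?VplusP ?VminusP.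
- move=> v /VplusP sv /VminusP; rewrite sv => /eqP.
  by rewrite -subr_eq0 opprK -mulr2n -scaler_nat scaler_eq0 pnatr_eq0 /= => /eqP.
- move=> a b /VplusP sa /VminusP sb.
  exact: (isometry_eigen_orthogonal s_lin Q_qf s_iso sa sb).
Qed.

Lemma splitting_sigma_stabilizes_V :
  Vplus_Vminus_orthogonal_splitting -> sigma_stabilizes_V.
Proof.
move=> [Vpm _] v; have [a [b [/VplusE sa /VminusE sb ->]]] := Vpm v.
by exists (a - b); rewrite (clifford_mapD j_cl) (antilinearD sigma_al) sa sb (clifford_mapB j_cl).
Qed.

End RealStructure.

Section Admissibility.
Variables (R : realType) (V : vectType R) (Q : V -> R) (A : algType R[i]).
Variables (j : V -> A) (c sigma : A -> A).
Hypotheses (A_cl : complexified_clifford Q j c) (sigma_rs : real_structure j sigma).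

Let j_cl : clifford_map Q j := A_cl.1.
Let c_al : antilinear_morph c := A_cl.2.2.1.
Let c_j : forall v, c (j v) = j v := A_cl.2.2.2.2.
Let sigma_al : antilinear_morph sigma := sigma_rs.1.

Definition Vsigma_conj_stable : Prop :=
  forall x, Vsigma j sigma x -> Vsigma j sigma (c x).

Lemma admissible_iff_conj_fixes_sigmaV :
  admissible c sigma <-> forall v, c (sigma (j v)) = sigma (j v).
Proof.
split=> [adm v | c_fix]; first by rewrite -adm c_j.
apply: (complexified_clifford_morph_eq A_cl (antilinear_comp_calg_morph sigma_al c_al)
          (antilinear_comp_calg_morph c_al sigma_al)) => v.
by rewrite c_j c_fix.
Qed.

Lemma admissible_iff_Vsigma_conj_stable : admissible c sigma <-> Vsigma_conj_stable.
Proof.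
split=> [adm x [VCx sx] | c_st].
  by split; [exact: (VC_conj j_cl c_al c_j) | rewrite adm sx].
apply/admissible_iff_conj_fixes_sigmaV => v.
suff: sigma (c (j v)) = c (sigma (j v)) by rewrite c_j.
have [p [q [Vp Vq ->]]] := Vsigma_decomposition j_cl sigma_rs (VC_j j_cl v).
have [[_ sp] [_ sq]] := (Vp, Vq); have [[_ scp] [_ scq]] := (c_st p Vp, c_st q Vq).
rewrite !(antilinearD c_al, antilinearD sigma_al, antilinearZ c_al, antilinearZ sigma_al).
by rewrite !conjCK sp sq scp scq.
Qed.

Lemma admissible_iff_sigma_stabilizes_V :
  admissible c sigma <-> sigma_stabilizes_V j sigma.
Proof.
split=> [/admissible_iff_conj_fixes_sigmaV c_fix v | sigmaV].
  have [w sigma_jv] := VC_conj_fixed c_al c_j (sigma_rs.2.2 _ (VC_j j_cl v)) (c_fix v).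
  by exists w.
by apply/admissible_iff_conj_fixes_sigmaV => v; have [w ->] := sigmaV v; apply: c_j.
Qed.

End Admissibility.

Theorem lemma1 (R : realType) (V : vectType R) (Q : V -> R)
  (A : algType R[i]) (j : V -> A) (c : A -> A) (sigma : A -> A) :
  ~~ odd (\dim (fullv : {vspace V})) ->
  is_quadratic_form Q -> nondegenerate_qf Q ->
  complexified_clifford Q j c ->
  real_structure j sigma ->
  [/\ (admissible c sigma <-> (forall x, Vsigma j sigma x -> Vsigma j sigma (c x))),
      ((forall x, Vsigma j sigma x -> Vsigma j sigma (c x)) <->
         (forall v : V, exists w : V, sigma (j v) = j w)),
      ((forall v : V, exists w : V, sigma (j v) = j w) <->
         (exists s : V -> V,
            (forall (a : R) (u v : V), s (a *: u + v) = a *: s u + s v) /\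
            (forall v, Q (s v) = Q v) /\ (forall v, s (s v) = v) /\
            (forall v, sigma (j v) = j (s v)))) &
      ((exists s : V -> V,
            (forall (a : R) (u v : V), s (a *: u + v) = a *: s u + s v) /\
            (forall v, Q (s v) = Q v) /\ (forall v, s (s v) = v) /\
            (forall v, sigma (j v) = j (s v))) <->
       ((forall v : V, exists a b : V, [/\ Vplus j sigma a, Vminus j sigma b & v = a + b]) /\
        (forall v : V, Vplus j sigma v -> Vminus j sigma v -> v = 0) /\
        (forall a b : V, Vplus j sigma a -> Vminus j sigma b -> polarQ Q a b = 0)))].
Proof.
move=> _ Q_qf Q_nd A_cl sigma_rs.
have adm_Vsigma := admissible_iff_Vsigma_conj_stable A_cl sigma_rs.
have adm_V := admissible_iff_sigma_stabilizes_V A_cl sigma_rs.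
have V_sym := sigma_stabilizes_V_orthogonal_symmetry A_cl.1 sigma_rs Q_nd.
split.
- exact: adm_Vsigma.
- exact: iff_trans (iff_sym adm_Vsigma) adm_V.
- exact: V_sym.
- split; first exact: (orthogonal_symmetry_splitting A_cl.1 sigma_rs Q_nd Q_qf).
  by move/(splitting_sigma_stabilizes_V A_cl.1 sigma_rs)/V_sym.
Qed.
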